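(* Let $F$ be an algebraically closed field with $\mathrm{char}\,F\ne2$. Then the maximal Mathieu subspaces of $M_2(F)$ are exactly the following: (i) $I_2^\perp=\{b\in M_2(F):\mathrm{Tr}(b)=0\}$; (ii) the subspaces $F(\lambda_1e_1+\lambda_2e_2)+e_1M_2(F)e_2$, where $e_1,e_2$ are nonzero idempotents with $e_1+e_2=I_2$ and $\lambda_1,\lambda_2\in F$ are distinct, nonzero, with $\lambda_1+\lambda_2\ne0$; (iii) the subspaces $F(I_2+c)$ with $c\in M_2(F)$ nonzero and nilpotent.
   Context: Let $\mathcal A$ be an associative algebra over a field $F$. An $F$-subspace $M\subseteq\mathcal A$ is a Mathieu subspace (MS) of $\mathcal A$ if for all $a,b,c\in\mathcal A$ such that $a^m\in M$ for all $m\ge 1$, there exists $N$ (depending on $a,b,c$) such that $ba^mc\in M$ for all $m\ge N$. A maximal MS of $\mathcal A$ is a proper MS of $\mathcal A$ that is not properly contained in any proper MS of $\mathcal A$. *)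

From HB Require Import structures.
From mathcomp Require Import all_boot all_order all_algebra.
Set Implicit Arguments. Unset Strict Implicit. Unset Printing Implicit Defensive.
Import Order.TTheory GRing.Theory Num.Theory.
Local Open Scope ring_scope.

(* F-subspaces of M_{n+1}(F) are represented by {vspace 'M[F]_n.+1}
   (every subspace of a finite-dimensional space is one). *)

Definition mathieu_subspace (F : fieldType) (n : nat)
  (M : {vspace 'M[F]_n.+1}) : Prop :=
  forall a b c : 'M[F]_n.+1,
    (forall m : nat, (0 < m)%N -> a ^+ m \in M) ->
    exists N : nat, forall m : nat, (N <= m)%N -> b * a ^+ m * c \in M.

Definition maximal_mathieu_subspace (F : fieldType) (n : nat)
  (M : {vspace 'M[F]_n.+1}) : Prop :=
  [/\ M != fullv, mathieu_subspace M &
      forall N : {vspace 'M[F]_n.+1},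
        N != fullv -> mathieu_subspace N -> (M <= N)%VS -> N = M].

(* A proper Mathieu subspace of M_n(F) contains no nonzero idempotent e: with e it would contain
   every b * e * c, and these span the simple algebra M_n(F). Conversely, in M_2(F) Cayley-Hamilton
   shows that a subspace without nonzero idempotents is Mathieu. So the maximal Mathieu subspaces
   of M_2(F) are the maximal idempotent-free subspaces M.
   If M consists of trace-zero matrices, it is sl_2. Otherwise M contains some x with tr x != 0,
   and every trace-zero k in M satisfies det k = 0 and tr (x k) = 0: else some x + t k would be a
   singular matrix of nonzero trace, hence a multiple of an idempotent. Thus the trace-zero part of
   M is either a line F c with c^2 = 0 or trivial. In the first case c is a left and right
   eigenvector of x, and M = F x + F c is F x + e1 M_2(F) e2 for the spectral idempotents e1, e2
   of x. In the second case M = F x; if x had distinct eigenvalues, F x + F e1 w e2 would still be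
   idempotent-free, so x = a (1 + c) with c nilpotent. *)

From HB Require Import structures.
From mathcomp Require Import all_boot all_order all_algebra.
From mathcomp Require Import ring.
Set Implicit Arguments. Unset Strict Implicit. Unset Printing Implicit Defensive.
Import GRing.Theory.
Local Open Scope ring_scope.

Section MatrixIdempotents.
Variables (F : fieldType) (n : nat).
Implicit Types (A B : 'M[F]_n.+1) (M N : {vspace 'M[F]_n.+1}).

Lemma matrix_neq0P A : reflect (exists i j, A i j != 0) (A != 0).
Proof.
apply: (iffP idP) => [nzA | [i [j]]]; last by apply: contraNneq => ->; rewrite mxE.
have [/existsP[i /existsP[j Aij]] | A0] := boolP [exists i, exists j, A i j != 0].
  by exists i, j.
case/eqP: nzA; apply/matrixP => i j; rewrite mxE; apply/eqP.
by move: A0; rewrite negb_exists => /forallP/(_ i); rewrite negb_exists => /forallP/(_ j)/negPn.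
Qed.

Lemma mul_delta_mx_entry A B (i j k l : 'I_n.+1) :
  (A * delta_mx j k * B) i l = A i j * B k l.
Proof.
rewrite -!mulmxE mxE (bigD1 k) //= big1 => [|r /negbTE rk]; last first.
  by rewrite mxE big1 ?mul0r // => s _; rewrite !mxE rk andbF mulr0.
rewrite addr0 mxE (bigD1 j) //= big1 => [|s /negbTE sj]; last by rewrite !mxE sj mulr0.
by rewrite !mxE !eqxx /= mulr1 addr0.
Qed.

Lemma delta_mx_sandwich A (i j k l : 'I_n.+1) :
  delta_mx k i * A * delta_mx j l = A i j *: delta_mx k l.
Proof.
apply/matrixP => p q; rewrite !mxE (bigD1 j) //= big1 => [|r /negbTE rj]; last first.
  by rewrite !mxE rj /= mulr0.
rewrite addr0 !mxE (bigD1 i) //= big1 => [|r /negbTE ri]; last by rewrite !mxE ri andbF mul0r.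
by rewrite addr0 !mxE !eqxx !andbT /= mulrAC -natrM mulnb mulrC.
Qed.

Lemma sandwich_neq0 A B : A != 0 -> B != 0 -> exists w, A * w * B != 0.
Proof.
move=> /matrix_neq0P[i [j Aij]] /matrix_neq0P[k [l Bkl]]; exists (delta_mx j k).
by apply/matrix_neq0P; exists i, l; rewrite mul_delta_mx_entry mulf_neq0.
Qed.

Lemma mxtrace_sandwich_orth A B (w : 'M[F]_n.+1) : B * A = 0 -> \tr (A * w * B) = 0.
Proof. by move=> BA; rewrite mxtrace_mulC mulmxE mulrA BA mul0r mxtrace0. Qed.

Definition idempotent_free M := forall e, e \in M -> e * e = e -> e = 0.

Definition maximal_idempotent_free M :=
  idempotent_free M /\ forall N, idempotent_free N -> (M <= N)%VS -> N = M.

Lemma idempotent_free_notin1 M : idempotent_free M -> 1 \notin M.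
Proof. by move=> freeM; apply/negP => /freeM/(_ (mulr1 1))/eqP; rewrite oner_eq0. Qed.

Lemma idempotent_free_proper M : idempotent_free M -> M != fullv.
Proof. by move/idempotent_free_notin1; apply: contraNneq => ->; rewrite memvf. Qed.

Lemma idempotent_free_scalar M x mu :
  idempotent_free M -> x \in M -> \tr x != 0 -> x != mu *: 1.
Proof.
move=> /idempotent_free_notin1 notM1 xM; apply: contraNneq => xE.
have [mu0 | mu0] := eqVneq mu 0; first by rewrite xE mu0 scale0r mxtrace0.
by case/negP: notM1; rewrite -(scalerK mu0 1) -xE memvZ.
Qed.

(* A nonzero idempotent e of a Mathieu subspace puts every b * e * c in it, and these span the
   simple algebra M_(n+1)(F). *)
Lemma mathieu_idempotent_free M : M != fullv -> mathieu_subspace M -> idempotent_free M.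
Proof.
move=> + MS e eM ee; apply: contraNeq => /matrix_neq0P[i [j eij]].
have eX m : e ^+ m.+1 = e by elim: m => [|m IH]; rewrite ?expr1 // exprS IH ee.
have eXM m : (0 < m)%N -> e ^+ m \in M by case: m => // m _; rewrite eX.
have sandwichM b c : b * e * c \in M.
  have [N HN] := MS e b c eXM.
  by have := HN N.+1 (leqnSn N); rewrite eX.
have deltaM k l : delta_mx k l \in M.
  have := memvZ (e i j)^-1 (sandwichM (delta_mx k i) (delta_mx j l)).
  by rewrite delta_mx_sandwich scalerA mulVf // scale1r.
rewrite eqEsubv subvf /=; apply/subvP => y _; rewrite [y]matrix_sum_delta.
by apply: memv_suml => p _; apply: memv_suml => q _; rewrite memvZ.
Qed.

End MatrixIdempotents.

Section TraceZero.
Variables (F : fieldType) (n : nat).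

Definition mxtrace_vec (A : 'M[F]_n.+1) : F^o := \tr A.

Fact mxtrace_vec_is_linear : linear mxtrace_vec.
Proof. by move=> t A B; rewrite /mxtrace_vec mxtraceD mxtraceZ. Qed.

HB.instance Definition _ :=
  GRing.isLinear.Build F 'M[F]_n.+1 F^o _ mxtrace_vec mxtrace_vec_is_linear.

Definition sl : {vspace 'M[F]_n.+1} := lker (linfun mxtrace_vec).

Lemma mem_sl (A : 'M[F]_n.+1) : (A \in sl) = (\tr A == 0).
Proof. by rewrite memv_ker lfunE. Qed.

End TraceZero.

Section SpectralProjections.
Variables (F : fieldType) (A : algType F).
Implicit Types (x v : A) (a d : F).

Lemma scalerIl v : v != 0 -> injective ( *:%R^~ v : F -> A).
Proof.
move=> nz a b /eqP; rewrite -subr_eq0 -scalerBl scaler_eq0 (negbTE nz) orbF subr_eq0.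
by move/eqP.
Qed.

Lemma eigen_of_factor x a v : (x - a%:A) * v = 0 -> x * v = a *: v.
Proof. by move/eqP; rewrite mulrBl -scalerAl mul1r subr_eq0 => /eqP. Qed.

Lemma factor_comm x a d : (x - a%:A) * (x - d%:A) = (x - d%:A) * (x - a%:A).
Proof.
have xa_x : GRing.comm (x - a%:A) x.
  exact: commr_sym (commrB (commr_refl x) (commr_sym (comm_alg a x))).
exact: commrB xa_x (commr_sym (comm_alg d _)).
Qed.

Lemma factor_expand x a d : (x - a%:A) * (x - d%:A) = x * x - (a + d) *: x + (a * d)%:A.
Proof.
rewrite mulrBl !mulrBr -!scalerAl -!scalerAr !mul1r mulr1 scalerA opprB scalerDl.
by rewrite opprD !addrA addrAC (addrAC (x * x)).
Qed.

Definition spectral x a d := (a - d)^-1 *: (x - d%:A).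

Lemma spectral_eq0 x a d : a != d -> (spectral x a d == 0) = (x == d%:A).
Proof. by move=> ad; rewrite scaler_eq0 invr_eq0 subr_eq0 (negbTE ad) subr_eq0. Qed.

Lemma spectral_sum x a d : a != d -> spectral x a d + spectral x d a = 1.
Proof.
move=> ad; rewrite /spectral -[d - a]opprB invrN scaleNr -scalerBr [- (x - _)]opprB.
by rewrite [X in _ *: X]addrC addrA subrK -scalerBl scalerA mulVf ?subr_eq0 // scale1r.
Qed.

Lemma spectral_decomposition x a d : a != d -> a *: spectral x a d + d *: spectral x d a = x.
Proof.
move=> ad; rewrite /spectral -[d - a]opprB invrN scaleNr scalerN !scalerA.
rewrite -!(mulrC (a - d)^-1) -!scalerA -scalerBr !scalerBr !scalerA.
rewrite -!mulrA (mulrC d a) opprB addrA subrK -scalerBl -mulrBr.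
by rewrite mulVf ?subr_eq0 // scale1r.
Qed.

Lemma mul_spectral_eigen x a d v : a != d -> x * v = a *: v -> spectral x a d * v = v.
Proof.
move=> ad xv; rewrite /spectral -scalerAl mulrBl xv -scalerAl mul1r -scalerBl.
by rewrite scalerA mulVf ?subr_eq0 // scale1r.
Qed.

Lemma mul_spectral_eigen0 x a d v : x * v = d *: v -> spectral x a d * v = 0.
Proof. by move=> xv; rewrite /spectral -scalerAl mulrBl xv -scalerAl mul1r subrr scaler0. Qed.

Lemma mul_eigen_spectral x a d v : a != d -> v * x = a *: v -> v * spectral x a d = v.
Proof.
move=> ad vx; rewrite /spectral -scalerAr mulrBr vx -scalerAr mulr1 -scalerBl.
by rewrite scalerA mulVf ?subr_eq0 // scale1r.
Qed.

Lemma mul_eigen_spectral0 x a d v : v * x = d *: v -> v * spectral x a d = 0.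
Proof. by move=> vx; rewrite /spectral -scalerAr mulrBr vx -scalerAr mulr1 subrr scaler0. Qed.

Lemma spectral_idem x a d : a != d -> (x - a%:A) * (x - d%:A) = 0 ->
  spectral x a d * spectral x a d = spectral x a d.
Proof.
move=> ad /eigen_of_factor x_eigen.
by rewrite {2}/spectral -scalerAr mul_spectral_eigen.
Qed.

End SpectralProjections.

Section Peirce.
Variables (F : fieldType) (A : algType F) (e1 e2 : A).
Hypotheses (e1_idem : e1 * e1 = e1) (e1e2 : e1 + e2 = 1).

Let e2E : e2 = 1 - e1. Proof. by rewrite -e1e2 addrC addKr. Qed.

Lemma peirce_idem2 : e2 * e2 = e2.
Proof. by rewrite e2E mulrBr mulr1 mulrBl mul1r e1_idem subrr subr0. Qed.

Lemma peirce_orth21 : e2 * e1 = 0.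
Proof. by rewrite e2E mulrBl mul1r e1_idem subrr. Qed.

Hypotheses (e1_neq0 : e1 != 0) (e2_neq0 : e2 != 0).

(* z * e1 = (t * l1) *: e1 and e2 * z = (t * l2) *: e2, so for an idempotent z these scalars are
   idempotent: either t = 0 and z = e1 * y * e2 squares to 0, or t * l1 = t * l2 = 1. *)
Lemma peirce_idempotent_eq0 (l1 l2 t : F) y : l1 != l2 -> l1 != 0 -> l2 != 0 ->
  let z := t *: (l1 *: e1 + l2 *: e2) + e1 * y * e2 in z * z = z -> z = 0.
Proof.
move=> l12 l1_neq0 l2_neq0 z zz.
have ze1 : z * e1 = (t * l1) *: e1.
  rewrite /z !mulrDl -!scalerAl mulrDl -!scalerAl e1_idem peirce_orth21 scaler0 addr0.
  by rewrite -[_ * e2 * e1]mulrA peirce_orth21 mulr0 addr0 scalerA.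
have e2z : e2 * z = (t * l2) *: e2.
  rewrite /z !mulrDr -!scalerAr mulrDr -!scalerAr peirce_idem2 peirce_orth21 scaler0 add0r.
  by rewrite !mulrA peirce_orth21 !mul0r addr0 scalerA.
have [t0 | tn0] := eqVneq t 0.
  move: zz; rewrite /z t0 scale0r add0r => <-.
  by rewrite -!mulrA (mulrA e2) peirce_orth21 mul0r !mulr0.
have scalar_idem1 (s : F) : s != 0 -> s * s = s -> s = 1.
  by move=> s0 ss; apply: (mulfI s0); rewrite ss mulr1.
have tl1 : t * l1 = 1.
  apply: scalar_idem1; first exact: mulf_neq0.
  have : z * (z * e1) = z * e1 by rewrite mulrA zz.
  by rewrite ze1 -scalerAr ze1 scalerA => /(scalerIl e1_neq0).
have tl2 : t * l2 = 1.
  apply: scalar_idem1; first exact: mulf_neq0.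
  have : e2 * z * z = e2 * z by rewrite -mulrA zz.
  by rewrite e2z -scalerAl e2z scalerA => /(scalerIl e2_neq0).
by case/eqP: l12; apply: (mulfI tn0); rewrite tl1 tl2.
Qed.

End Peirce.

Section Matrix2.
Variable F : fieldType.
Implicit Types (x y z : 'M[F]_2) (M N : {vspace 'M[F]_2}).

Definition mx2 (a b c d : F) : 'M[F]_2 :=
  \matrix_(i < 2, j < 2) if i == 0 :> nat then (if j == 0 :> nat then a else b)
                          else (if j == 0 :> nat then c else d).

Lemma ord2P (P : 'I_2 -> Prop) : P 0 -> P 1 -> forall i, P i.
Proof. by move=> P0 P1 [[|[|//]] Hi]; [move: P0 | move: P1]; congr P; apply: val_inj. Qed.

Lemma mx2_ind (P : 'M[F]_2 -> Prop) : (forall a b c d, P (mx2 a b c d)) -> forall x, P x.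
Proof.
move=> Pmx2 x; suff -> : x = mx2 (x 0 0) (x 0 1) (x 1 0) (x 1 1) by [].
by apply/matrixP; elim/ord2P; elim/ord2P; rewrite mxE.
Qed.

Lemma mx2_eq a b c d a' b' c' d' :
  a = a' -> b = b' -> c = c' -> d = d' -> mx2 a b c d = mx2 a' b' c' d'.
Proof. by move=> -> -> -> ->. Qed.

Lemma mx2_mul a b c d a' b' c' d' :
  mx2 a b c d * mx2 a' b' c' d' = mx2 (a*a'+b*c') (a*b'+b*d') (c*a'+d*c') (c*b'+d*d').
Proof.
by apply/matrixP; elim/ord2P; elim/ord2P; rewrite !mxE !big_ord_recr big_ord0 !mxE /= add0r.
Qed.

Lemma mx2_add a b c d a' b' c' d' :
  mx2 a b c d + mx2 a' b' c' d' = mx2 (a+a') (b+b') (c+c') (d+d').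
Proof. by apply/matrixP; elim/ord2P; elim/ord2P; rewrite !mxE. Qed.

Lemma mx2_opp a b c d : - mx2 a b c d = mx2 (-a) (-b) (-c) (-d).
Proof. by apply/matrixP; elim/ord2P; elim/ord2P; rewrite !mxE. Qed.

Lemma mx2_scale t a b c d : t *: mx2 a b c d = mx2 (t*a) (t*b) (t*c) (t*d).
Proof. by apply/matrixP; elim/ord2P; elim/ord2P; rewrite !mxE. Qed.

Lemma mx2_1 : 1 = mx2 1 0 0 1.
Proof. by apply/matrixP; elim/ord2P; elim/ord2P; rewrite !mxE. Qed.

Lemma mx2_0 : 0 = mx2 0 0 0 0.
Proof. by apply/matrixP; elim/ord2P; elim/ord2P; rewrite !mxE. Qed.

Lemma mxtrace_mx2 a b c d : \tr (mx2 a b c d) = a + d.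
Proof. by rewrite /mxtrace !big_ord_recr big_ord0 !mxE /= add0r. Qed.

Lemma det_mx2 a b c d : \det (mx2 a b c d) = a * d - b * c.
Proof.
by rewrite (expand_det_row _ 0) !big_ord_recr big_ord0 /cofactor !det_mx11 !mxE /=; ring.
Qed.

Local Ltac mx2_ring :=
  rewrite ?mx2_1 ?mx2_0 ?(mx2_mul, mx2_add, mx2_opp, mx2_scale, mxtrace_mx2, det_mx2);
  (apply: mx2_eq; ring) || ring.

Lemma mx2_CayleyHamilton x : x * x = \tr x *: x - (\det x)%:A.
Proof. by elim/mx2_ind: x => *; mx2_ring. Qed.

Lemma det_mx2D x y : \det (x + y) = \det x + \det y + \tr x * \tr y - \tr (x * y).
Proof. by elim/mx2_ind: x => *; elim/mx2_ind: y => *; mx2_ring. Qed.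

Lemma mx2_anticomm x y :
  x * y + y * x = \tr x *: y + \tr y *: x - (\tr x * \tr y - \tr (x * y))%:A.
Proof. by elim/mx2_ind: x => *; elim/mx2_ind: y => *; mx2_ring. Qed.

Lemma nil_mx2_sqr (c : 'M[F]_2) : \tr c = 0 -> \det c = 0 -> c * c = 0.
Proof. by move=> trc detc; rewrite mx2_CayleyHamilton trc detc !scale0r subr0. Qed.

Lemma nil_mx2_sandwich (c : 'M[F]_2) y : \tr c = 0 -> \det c = 0 -> c * y * c = \tr (y * c) *: c.
Proof.
move=> trc detc; have := mx2_anticomm c (y * c).
have -> : y * c * c = 0 by rewrite -mulrA nil_mx2_sqr // mulr0.
have -> : \tr (c * (y * c)) = 0 by rewrite mxtrace_mulC mulmxE -mulrA nil_mx2_sqr // mulr0 mxtrace0.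
by rewrite trc mul0r !scale0r add0r subrr scale0r subr0 addr0 mulrA.
Qed.

(* Each squared 2 x 2 minor of the coordinates of c and k is a combination of det c, det k and
   tr (c * k), so all these minors vanish. *)
Lemma nil_mx2_colinear (c k : 'M[F]_2) : c != 0 -> \tr c = 0 -> \det c = 0 ->
  \tr k = 0 -> \det k = 0 -> \tr (c * k) = 0 -> exists s, k = s *: c.
Proof.
elim/mx2_ind: c => p q r d; elim/mx2_ind: k => u v w d'.
rewrite mx2_mul !mxtrace_mx2 !det_mx2 => c_neq0 /addr0_eq dE detc /addr0_eq d'E detk trck.
subst d d'.
have m1 : p * v = q * u.
  apply/eqP; rewrite -subr_eq0 -sqrf_eq0; apply/eqP.
  have -> : (p * v - q * u) ^+ 2 = - v ^+ 2 * (p * - p - q * r) - q ^+ 2 * (u * - u - v * w)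
      - q * v * (p * u + q * w + (r * v + - p * - u)) by ring.
  by rewrite detc detk trck; ring.
have m2 : p * w = r * u.
  apply/eqP; rewrite -subr_eq0 -sqrf_eq0; apply/eqP.
  have -> : (p * w - r * u) ^+ 2 = - w ^+ 2 * (p * - p - q * r) - r ^+ 2 * (u * - u - v * w)
      - r * w * (p * u + q * w + (r * v + - p * - u)) by ring.
  by rewrite detc detk trck; ring.
have m3 : q * w = r * v.
  apply/eqP; rewrite -subr_eq0 -sqrf_eq0; apply/eqP.
  have -> : (q * w - r * v) ^+ 2 = (p * u + q * w + (r * v + - p * - u)) ^+ 2
      - 4%:R * p * u * (p * u + q * w + (r * v + - p * - u))
      - 4%:R * p ^+ 2 * (u * - u - v * w) - 4%:R * u ^+ 2 * (p * - p - q * r)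
      - 4%:R * (p * - p - q * r) * (u * - u - v * w) by ring.
  by rewrite detc detk trck; ring.
suff [s [us vs ws]] : exists s, [/\ u = s * p, v = s * q & w = s * r].
  by exists s; rewrite mx2_scale us vs ws mulrN.
have [p0 | pn0] := eqVneq p 0; last first.
  exists (u / p); split; first by field.
    by apply: (mulfI pn0); rewrite m1; field.
  by apply: (mulfI pn0); rewrite m2; field.
have [q0 | qn0] := eqVneq q 0; last first.
  exists (v / q); split; last by apply: (mulfI qn0); rewrite m3; field.
    by apply: (mulfI qn0); rewrite -m1; field.
  by field.
have rn0 : r != 0 by apply: contraNneq c_neq0 => r0; rewrite p0 q0 r0 oppr0 -mx2_0.
exists (w / r); split; last by field.
  by apply: (mulfI rn0); rewrite -m2; field.
by apply: (mulfI rn0); rewrite -m3; field.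
Qed.

Lemma nil_mx2_annihilator (c z : 'M[F]_2) : c != 0 -> \tr c = 0 -> \det c = 0 ->
  c * z = 0 -> z * c = 0 -> exists s, z = s *: c.
Proof.
move=> c_neq0 trc detc cz zc.
have trz : \tr z = 0.
  apply: (scalerIl c_neq0); have := mx2_anticomm z c.
  by rewrite zc cz trc mxtrace0 mulr0 subr0 !scale0r !addr0 subr0.
have detz : \det z = 0.
  apply: (scalerIl c_neq0); have : z * z * c = 0 by rewrite -mulrA zc mulr0.
  rewrite mx2_CayleyHamilton trz scale0r sub0r mulNr -scalerAl mul1r scale0r.
  by move/eqP; rewrite oppr_eq0 => /eqP.
by apply: nil_mx2_colinear; rewrite ?cz ?mxtrace0.
Qed.

Lemma nilpotent_mx2 (c : 'M[F]_2) k : c ^+ k = 0 -> \tr c = 0 /\ \det c = 0.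
Proof.
case: k => [/eqP | k ck]; first by rewrite expr0 oner_eq0.
have detc : \det c = 0.
  have detX m : \det (c ^+ m) = \det c ^+ m.
    by elim: m => [|m IH]; rewrite ?expr0 ?det1 // !exprS detM IH.
  have : \det c ^+ k.+1 == 0 by rewrite -detX ck det0.
  by rewrite expf_eq0 => /eqP.
split=> //; have cX m : c ^+ m.+1 = \tr c ^+ m *: c.
  elim: m => [|m IH]; first by rewrite expr1 expr0 scale1r.
  by rewrite exprS IH -scalerAr mx2_CayleyHamilton detc scale0r subr0 scalerA -exprSr.
have [-> | c_neq0] := eqVneq c 0; first by rewrite mxtrace0.
by move: ck; rewrite cX => /eqP; rewrite scaler_eq0 (negbTE c_neq0) orbF expf_eq0 => /andP[_ /eqP].
Qed.

Lemma nil_mx2_eigen x (c : 'M[F]_2) : c != 0 -> \tr c = 0 -> \det c = 0 -> \tr (x * c) = 0 ->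
  exists a d, [/\ a + d = \tr x, a * d = \det x, x * c = a *: c & c * x = d *: c].
Proof.
move=> c_neq0 trc detc trxc.
have [a xc] : exists a, x * c = a *: c.
  apply: nil_mx2_annihilator => //; first by rewrite mulrA nil_mx2_sandwich // trxc scale0r.
  by rewrite -mulrA nil_mx2_sqr // mulr0.
have [d cx] : exists d, c * x = d *: c.
  apply: nil_mx2_annihilator => //; first by rewrite mulrA nil_mx2_sqr // mul0r.
  by rewrite nil_mx2_sandwich // trxc scale0r.
have sad : a + d = \tr x.
  apply: (scalerIl c_neq0); rewrite scalerDl -xc -cx mx2_anticomm trc trxc.
  by rewrite mulr0 subr0 !scale0r addr0 subr0.
exists a, d; split => //.
have : (a * a) *: c = (\tr x * a - \det x) *: c.
  rewrite -scalerA -xc scalerAr -xc mulrA mx2_CayleyHamilton mulrBl -scalerAl -scalerAl mul1r.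
  by rewrite xc scalerA scalerBl.
move/(scalerIl c_neq0); rewrite -sad => aa.
by apply: (subrI ((a + d) * a)); rewrite -aa; ring.
Qed.

Lemma mx2_factor x a d : a + d = \tr x -> a * d = \det x -> (x - a%:A) * (x - d%:A) = 0.
Proof. by move=> sad pad; rewrite factor_expand sad pad mx2_CayleyHamilton addrAC subrK subrr. Qed.

Lemma mxtrace_mx2_idem (e : 'M[F]_2) : e * e = e -> e != 0 -> e != 1 -> \tr e = 1.
Proof.
move=> ee e_neq0 e_neq1.
have dete : \det e = 0.
  apply/eqP; apply: contraNT e_neq1 => dete.
  have eU : e \is a GRing.unit by rewrite unitmxE unitfE.
  have : e^-1 * (e * e) = e^-1 * e by rewrite ee.
  by rewrite mulKr // mulVr // => ->.
by apply: (scalerIl e_neq0); rewrite scale1r -[RHS]ee mx2_CayleyHamilton dete scale0r subr0.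
Qed.

Lemma idempotent_free_det M y : idempotent_free M -> y \in M -> \tr y != 0 -> \det y != 0.
Proof.
move=> freeM yM try; apply/eqP => dety.
have yy : y * y = \tr y *: y by rewrite mx2_CayleyHamilton dety scale0r subr0.
have : (\tr y)^-1 *: y = 0.
  apply: freeM; first by rewrite memvZ.
  by rewrite -scalerAl -scalerAr yy !scalerA divfK.
move/eqP; rewrite scaler_eq0 invr_eq0 (negbTE try) /= => /eqP y0.
by move: try; rewrite y0 mxtrace0 eqxx.
Qed.

(* By Cayley-Hamilton, a, a ^+ 2 in M with a ^+ 2 != 0 produce either the idempotent a / tr a
   or the unit 1 in M. *)
Lemma idempotent_free_mathieu M : idempotent_free M -> mathieu_subspace M.
Proof.
move=> freeM a b c aXM.
have [aa0 | aa_neq0] := eqVneq (a * a) 0.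
  by exists 2%N => m m2; rewrite -(subnK m2) exprD expr2 aa0 !mulr0 mul0r mem0v.
exfalso; have aM : a \in M by have := aXM 1%N isT; rewrite expr1.
have [deta | deta] := eqVneq (\det a) 0.
  have tra : \tr a != 0 by apply: contraNneq aa_neq0 => tra; exact/eqP/nil_mx2_sqr.
  by move: (idempotent_free_det freeM aM tra); rewrite deta eqxx.
have a2M : a * a \in M by have := aXM 2%N isT; rewrite expr2.
case/negP: (idempotent_free_notin1 freeM).
have -> : 1 = (\det a)^-1 *: (\tr a *: a - a * a).
  by rewrite mx2_CayleyHamilton opprB addrC subrK scalerA mulVf // scale1r.
by rewrite memvZ // memvB // memvZ.
Qed.

Lemma maximal_mathieuE M : maximal_mathieu_subspace M <-> maximal_idempotent_free M.
Proof.
split=> [[Mproper MS_M maxM] | [freeM maxM]].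
  split=> [|N freeN MN]; first exact: mathieu_idempotent_free.
  by apply: maxM => //; [exact: idempotent_free_proper | exact: idempotent_free_mathieu].
split=> [||N Nproper MS_N MN]; [exact: idempotent_free_proper | exact: idempotent_free_mathieu |].
by apply: maxM => //; exact: mathieu_idempotent_free.
Qed.

Lemma sl_idempotent_free : (2%:R : F) != 0 -> idempotent_free (sl F 1).
Proof.
move=> two e; rewrite mem_sl => /eqP tre ee.
have eE : e = - (\det e)%:A by rewrite -[LHS]ee mx2_CayleyHamilton tre scale0r sub0r.
move: tre; rewrite {1}eE raddfN /= mxtraceZ mxtrace1 => /eqP.
by rewrite oppr_eq0 mulf_eq0 (negbTE two) orbF => /eqP dete; rewrite eE dete scale0r oppr0.
Qed.

Lemma sl_maximal : (2%:R : F) != 0 -> maximal_idempotent_free (sl F 1).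
Proof.
move=> two; split=> [|N freeN slN]; first exact: sl_idempotent_free.
apply/eqP; rewrite eqEsubv slN andbT; apply/subvP => y yN; rewrite mem_sl.
apply: contraNT (idempotent_free_notin1 freeN) => try.
have -> : 1 = (1 - (2%:R / \tr y) *: y) + (2%:R / \tr y) *: y by rewrite subrK.
by rewrite memvD ?memvZ // (subvP slN) // mem_sl raddfB /= mxtraceZ divfK // mxtrace1 subrr.
Qed.

End Matrix2.

Section ClosedField.
Variable F : closedFieldType.
Implicit Types (x y : 'M[F]_2) (M N : {vspace 'M[F]_2}).

Lemma closed_quadratic_root (p q : F) : exists a, a * a = p * a + q.
Proof.
have [a] := @solve_monicpoly F 2 (fun i => if i == 0%N then q else p) isT.
rewrite !big_ord_recr big_ord0 /= expr2 expr1 expr0 mulr1 add0r addrC => aa.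
by exists a.
Qed.

Lemma mx2_eigenvalues x : exists a d, a + d = \tr x /\ a * d = \det x.
Proof.
have [a aa] := closed_quadratic_root (\tr x) (- \det x).
by exists a, (\tr x - a); split; [rewrite addrC subrK | rewrite mulrBr aa; ring].
Qed.

(* If det k or tr (x k) did not vanish, the polynomial t |-> det (x + t k) of degree at most 2 would
   have a root, i.e. M would contain a singular matrix of nonzero trace. *)
Lemma idempotent_free_trace0 M x k : idempotent_free M -> x \in M -> \tr x != 0 ->
  k \in M -> \tr k = 0 -> \det k = 0 /\ \tr (x * k) = 0.
Proof.
move=> freeM xM trx kM trk.
have detE t : \det (x + t *: k) = \det x - t * \tr (x * k) + t ^+ 2 * \det k.
  by rewrite det_mx2D detZ -scalerAr !mxtraceZ trk; ring.
have det_neq0 t : \det (x + t *: k) != 0.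
  apply: (idempotent_free_det freeM); first by rewrite memvD // memvZ.
  by rewrite mxtraceD mxtraceZ trk mulr0 addr0.
have detk : \det k = 0.
  apply/eqP/negPn/negP => detk.
  have [t tt] := closed_quadratic_root (\tr (x * k) / \det k) (- \det x / \det k).
  by move/negP: (det_neq0 t); apply; rewrite detE expr2 tt; apply/eqP; field.
split=> //; apply/eqP/negPn/negP => trxk.
move/negP: (det_neq0 (\det x / \tr (x * k))); apply.
by rewrite detE detk mulr0 addr0; apply/eqP; field.
Qed.

Lemma idempotent_free_span M x c : idempotent_free M -> x \in M -> \tr x != 0 ->
  c \in M -> c != 0 -> \tr c = 0 -> forall y, y \in M -> exists t s, y = t *: x + s *: c.
Proof.
move=> freeM xM trx cM c_neq0 trc y yM.
set k := y - (\tr y / \tr x) *: x.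
have kM : k \in M by rewrite memvB // memvZ.
have trk : \tr k = 0 by rewrite raddfB /= mxtraceZ divfK // subrr.
have [detk _] := idempotent_free_trace0 freeM xM trx kM trk.
have [detc _] := idempotent_free_trace0 freeM xM trx cM trc.
have ckM : c + k \in M by rewrite memvD.
have trck0 : \tr (c + k) = 0 by rewrite mxtraceD trc trk addr0.
have [detck _] := idempotent_free_trace0 freeM xM trx ckM trck0.
have trck : \tr (c * k) = 0.
  by move: detck; rewrite det_mx2D detc detk trc mul0r !add0r => /eqP; rewrite oppr_eq0 => /eqP.
have [s ks] := nil_mx2_colinear c_neq0 trc detc trk detk trck.
by exists (\tr y / \tr x), s; rewrite -ks /k addrC subrK.
Qed.

Definition sl_space M := forall b : 'M[F]_2, b \in M = (\tr b == 0).

Definition peirce_space M :=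
  exists (e1 e2 : 'M[F]_2) (l1 l2 : F),
    [/\ e1 != 0, e2 != 0, e1 * e1 = e1, e2 * e2 = e2 & e1 + e2 = 1] /\
    [/\ l1 != l2, l1 != 0, l2 != 0 & l1 + l2 != 0] /\
    (forall b : 'M[F]_2, b \in M <->
       exists (t : F) (x : 'M[F]_2), b = t *: (l1 *: e1 + l2 *: e2) + e1 * x * e2).

Definition unipotent_line M :=
  exists c : 'M[F]_2,
    [/\ c != 0, (exists k : nat, c ^+ k = 0) &
        (forall b : 'M[F]_2, b \in M <-> exists t : F, b = t *: (1 + c))].

Lemma sl_space_maximal M : (2%:R : F) != 0 -> sl_space M -> maximal_idempotent_free M.
Proof.
move=> two slM; suff -> : M = sl F 1 by exact: sl_maximal.
by apply/vspaceP => b; rewrite slM mem_sl.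
Qed.

Lemma peirce_space_maximal M : peirce_space M -> maximal_idempotent_free M.
Proof.
move=> [e1 [e2 [l1 [l2 [[e1_neq0 e2_neq0 e1_idem e2_idem e1e2] [[l12 l1_neq0 l2_neq0 l1l2]]]]]]].
move=> memM.
split=> [z /memM[t [y ->]] | N freeN MN]; first exact: peirce_idempotent_eq0.
apply/eqP; rewrite eqEsubv MN andbT; apply/subvP => y yN.
set v := l1 *: e1 + l2 *: e2.
have vM : v \in M by apply/memM; exists 1, 0; rewrite scale1r mulr0 mul0r addr0.
have trv : \tr v != 0.
  have e1_neq1 : e1 != 1.
    by apply: contraNneq e2_neq0 => e1_1; rewrite -(addKr e1 e2) e1e2 e1_1 addNr.
  have e2_neq1 : e2 != 1.
    by apply: contraNneq e1_neq0 => e2_1; rewrite -(addrK e2 e1) e1e2 e2_1 subrr.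
  by rewrite mxtraceD !mxtraceZ !mxtrace_mx2_idem // !mulr1.
have [w c_neq0] := sandwich_neq0 e1_neq0 e2_neq0.
have cM : e1 * w * e2 \in M by apply/memM; exists 0, w; rewrite scale0r add0r.
have trc : \tr (e1 * w * e2) = 0 := mxtrace_sandwich_orth w (peirce_orth21 e1_idem e1e2).
have [t [s ->]] := idempotent_free_span freeN (subvP MN _ vM) trv (subvP MN _ cM) c_neq0 trc yN.
by apply/memM; exists t, (s *: w); rewrite -scalerAr -scalerAl.
Qed.

Lemma unipotent_line_maximal M : (2%:R : F) != 0 -> unipotent_line M -> maximal_idempotent_free M.
Proof.
move=> two [c [c_neq0 [k ck] memM]].
have [trc detc] := nilpotent_mx2 ck.
set x := 1 + c.
have xM : x \in M by apply/memM; exists 1; rewrite scale1r.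
have trx : \tr x = 2%:R by rewrite mxtraceD trc addr0 mxtrace1.
have xx : x * x = x + c by rewrite /x mulrDl !mulrDr !mul1r mulr1 nil_mx2_sqr // addr0.
split=> [z /memM[t ->] | N freeN MN].
  rewrite -scalerAl -scalerAr xx scalerA => zz.
  have tt : t * t = t.
    by have := congr1 mxtrace zz; rewrite !mxtraceZ mxtraceD trc addr0 trx => /(mulIf two).
  have [-> | t_neq0] := eqVneq t 0; first by rewrite scale0r.
  have t1 : t = 1 by apply: (mulfI t_neq0); rewrite tt mulr1.
  by move: zz; rewrite t1 mulr1 !scale1r -/x -{2}[x]addr0 => /addrI c0; rewrite c0 eqxx in c_neq0.
apply/eqP; rewrite eqEsubv MN andbT; apply/subvP => y yN.
have xN := subvP MN _ xM.
have trx_neq0 : \tr x != 0 by rewrite trx.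
set kk := y - (\tr y / \tr x) *: x.
have kN : kk \in N by rewrite memvB // memvZ.
have trk : \tr kk = 0 by rewrite raddfB /= mxtraceZ divfK // subrr.
have [detk trxk] := idempotent_free_trace0 freeN xN trx_neq0 kN trk.
have trck : \tr (c * kk) = 0 by move: trxk; rewrite /x mulrDl mul1r mxtraceD trk add0r.
have [s ks] := nil_mx2_colinear c_neq0 trc detc trk detk trck.
have [s0 | s_neq0] := eqVneq s 0.
  suff -> : y = (\tr y / \tr x) *: x by rewrite memvZ.
  by apply/eqP; rewrite -subr_eq0 -/kk ks s0 scale0r.
case/negP: (idempotent_free_notin1 freeN).
have cN : c \in N by rewrite -(scalerK s_neq0 c) -ks memvZ.
by rewrite -(addrK c 1) memvB.
Qed.

Lemma idempotent_free_nil_peirce M x c : idempotent_free M -> x \in M -> \tr x != 0 ->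
  c \in M -> c != 0 -> \tr c = 0 -> peirce_space M.
Proof.
move=> freeM xM trx cM c_neq0 trc.
have [detc trxc] := idempotent_free_trace0 freeM xM trx cM trc.
have [a [d [sad pad xc cx]]] := nil_mx2_eigen c_neq0 trc detc trxc.
have ad : a != d.
  apply/eqP => ad; subst d.
  have [s xs] : exists s, x - a%:A = s *: c.
    apply: nil_mx2_annihilator => //.
      by rewrite mulrBr cx -scalerAr mulr1 subrr.
    by rewrite mulrBl xc -scalerAl mul1r subrr.
  have xsM : x - s *: c \in M by rewrite memvB // memvZ.
  have : x - s *: c != a%:A.
    by apply: (idempotent_free_scalar _ freeM xsM); rewrite raddfB /= mxtraceZ trc mulr0 subr0.
  by rewrite -xs opprB addrC subrK eqxx.
have da : d != a by rewrite eq_sym.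
have x_factor := mx2_factor sad pad.
have [a_neq0 d_neq0] : a != 0 /\ d != 0.
  by apply/andP; rewrite -negb_or -mulf_eq0 pad; exact: idempotent_free_det freeM xM trx.
set e1 := spectral x a d; set e2 := spectral x d a.
have e1c : e1 * c = c := mul_spectral_eigen ad xc.
have ce2 : c * e2 = c := mul_eigen_spectral da cx.
have e2c : e2 * c = 0 := mul_spectral_eigen0 d xc.
have ce1 : c * e1 = 0 := mul_eigen_spectral0 a cx.
have xE : a *: e1 + d *: e2 = x := spectral_decomposition x ad.
exists e1, e2, a, d; split; last split.
- split.
  + by rewrite spectral_eq0 // (idempotent_free_scalar _ freeM xM trx).
  + by rewrite spectral_eq0 // (idempotent_free_scalar _ freeM xM trx).
  + exact: spectral_idem.
  + by apply: spectral_idem; rewrite // factor_comm.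
  + exact: spectral_sum.
- by split; rewrite // sad.
move=> b; rewrite xE; split=> [bM | [t [y ->]]].
  have [t [s ->]] := idempotent_free_span freeM xM trx cM c_neq0 trc bM.
  by exists t, (s *: c); rewrite -[e1 * _]scalerAr -[_ *: _ * e2]scalerAl e1c ce2.
rewrite memvD ?memvZ //.
have [s ->] : exists s, e1 * y * e2 = s *: c.
  apply: nil_mx2_annihilator => //; first by rewrite !mulrA ce1 !mul0r.
  by rewrite -[_ * e2 * c]mulrA e2c mulr0.
by rewrite memvZ.
Qed.

(* When x has two distinct eigenvalues, e1 * w * e2 could be added to M = F x. *)
Lemma maximal_line_unipotent M x : maximal_idempotent_free M -> x \in M -> \tr x != 0 ->
  (forall b, b \in M -> \tr b = 0 -> b = 0) -> unipotent_line M.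
Proof.
move=> [freeM maxM] xM trx sl0.
have Mx b : b \in M -> b = (\tr b / \tr x) *: x.
  move=> bM; apply/eqP; rewrite -subr_eq0; apply/eqP/sl0; first by rewrite memvB // memvZ.
  by rewrite raddfB /= mxtraceZ divfK // subrr.
have [a [d [sad pad]]] := mx2_eigenvalues x.
have x_factor := mx2_factor sad pad.
have [a_neq0 d_neq0] : a != 0 /\ d != 0.
  by apply/andP; rewrite -negb_or -mulf_eq0 pad; exact: idempotent_free_det freeM xM trx.
have [ad | ad] := eqVneq a d.
  subst d; set c := a^-1 *: (x - a%:A).
  have xE : x = a *: (1 + c) by rewrite /c scalerDr scalerA mulfV // scale1r addrC subrK.
  exists c; split.
  - rewrite /c scaler_eq0 invr_eq0 (negbTE a_neq0) subr_eq0 /=.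
    exact: (idempotent_free_scalar _ freeM xM trx).
  - by exists 2%N; rewrite expr2 /c -scalerAl -scalerAr x_factor !scaler0.
  move=> b; split=> [/Mx -> | [t ->]]; first by exists (\tr b / \tr x * a); rewrite {2}xE scalerA.
  by rewrite -(divfK a_neq0 t) -scalerA -xE memvZ.
exfalso; have da : d != a by rewrite eq_sym.
set e1 := spectral x a d; set e2 := spectral x d a.
have e1_neq0 : e1 != 0 by rewrite spectral_eq0 // (idempotent_free_scalar _ freeM xM trx).
have e2_neq0 : e2 != 0 by rewrite spectral_eq0 // (idempotent_free_scalar _ freeM xM trx).
have e1_idem : e1 * e1 = e1 := spectral_idem ad x_factor.
have e1e2 : e1 + e2 = 1 := spectral_sum x ad.
have [w c_neq0] := sandwich_neq0 e1_neq0 e2_neq0.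
set c := e1 * w * e2.
have trc : \tr c = 0 := mxtrace_sandwich_orth w (peirce_orth21 e1_idem e1e2).
have freeMc : idempotent_free (M + <[c]>)%VS.
  move=> z /memv_addP[m /Mx -> [u /vlineP[s ->] ->]].
  rewrite -(spectral_decomposition x ad) -/e1 -/e2 /c scalerAl scalerAr.
  exact: peirce_idempotent_eq0.
have cM : c \in M.
  by rewrite -(maxM _ freeMc (addvSl M <[c]>)); apply: (subvP (addvSr M _)); exact: memv_line.
by case/eqP: c_neq0; apply: sl0.
Qed.

Lemma maximal_idempotent_free_cases M : (2%:R : F) != 0 -> maximal_idempotent_free M ->
  [\/ sl_space M, peirce_space M | unipotent_line M].
Proof.
move=> two maxM; have [freeM maxM'] := maxM.
have [Msl | /subvPn[x xM]] := boolP (M <= sl F 1)%VS.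
  by apply: Or31 => b; rewrite -mem_sl (maxM' _ (sl_idempotent_free two) Msl).
rewrite mem_sl => trx.
have [sl0 | /subvPn[c]] := boolP (M :&: sl F 1 <= 0)%VS.
  apply/Or33/(maximal_line_unipotent maxM xM trx) => b bM trb.
  by apply/eqP; rewrite -memv0; apply: (subvP sl0); rewrite memv_cap bM mem_sl trb eqxx.
rewrite memv_cap memv0 mem_sl => /andP[cM /eqP trc] c_neq0.
exact: Or32 (idempotent_free_nil_peirce freeM xM trx cM c_neq0 trc).
Qed.

End ClosedField.

Theorem theorem3p5 (F : closedFieldType) (hF : (2 \notin [pchar F])%N)
  (M : {vspace 'M[F]_2}) :
  maximal_mathieu_subspace M <->
  [\/ (* (i) trace-zero matrices *)
      (forall b : 'M[F]_2, b \in M = (\tr b == 0)),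
      (* (ii) F(l1 e1 + l2 e2) + e1 M_2(F) e2 *)
      (exists (e1 e2 : 'M[F]_2) (l1 l2 : F),
         [/\ e1 != 0, e2 != 0, e1 * e1 = e1, e2 * e2 = e2 & e1 + e2 = 1] /\
         [/\ l1 != l2, l1 != 0, l2 != 0 & l1 + l2 != 0] /\
         (forall b : 'M[F]_2, b \in M <->
            exists (t : F) (x : 'M[F]_2),
              b = t *: (l1 *: e1 + l2 *: e2) + e1 * x * e2))
    | (* (iii) F(I_2 + c), c nonzero nilpotent *)
      (exists c : 'M[F]_2,
         [/\ c != 0, (exists k : nat, c ^+ k = 0) &
             (forall b : 'M[F]_2, b \in M <-> exists t : F, b = t *: (1 + c))])].
Proof.
have two : (2%:R : F) != 0 by move: hF; rewrite inE /=.
rewrite maximal_mathieuE; split; first exact: maximal_idempotent_free_cases.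
by case; [exact: sl_space_maximal | exact: peirce_space_maximal | exact: unipotent_line_maximal].
Qed.
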